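(* Let $\Phi:(X,d^X,\mu,T)\to(Y,d^Y,\nu,S)$ be a Borel factor map of compact model p.-p. systems, and let $\alpha>1$, $\delta>0$ and $\kappa>\kappa'>0$. Then for every $\alpha_1\in[1,\alpha)$ there exist $\kappa_1\in(\kappa',\kappa)$ and $\delta_1\in(0,\delta)$ such that \[\mathrm{BICOV}_{\alpha_1,\kappa_1,\kappa',\delta_1N}\big(X,d^{\mathbf{X}}_{[-N;0)},d^{\mathbf{X}}_{[0;N)},\mu\big)\ \ge\ \mathrm{BICOV}_{\alpha,\kappa,\kappa',\delta N}\big(Y,d^{\mathbf{Y}}_{[-N;0)},d^{\mathbf{Y}}_{[0;N)},\nu\big)\] for all sufficiently large $N$.
   Context: A compact model p.-p. system $(X,d^X,\mu,T)$: $(X,d^X)$ compact metric space, $T$ a homeomorphism, $\mu$ a $T$-invariant Borel probability. For finite $F\subseteq\mathbb{Z}$, $d^{\mathbf{X}}_F(x,x')=\sum_{n\in F}d^X(T^nx,T^nx')$. A Borel factor map is a Borel map $\Phi$ with $\Phi\circ T=S\circ\Phi$ $\mu$-a.e. and $\Phi_*\mu=\nu$ (not necessarily continuous). $B^d_r(x)=\{y:d(x,y)<r\}$, $B^d_r(F)=\bigcup_{x\in F}B^d_r(x)$. For a standard Borel space with totally bounded Borel pseudometrics $d_1,d_2$ and finite measure $\mu$: $\mathrm{bicov}_a((X,d_1,d_2,\mu),\delta)=\min\{|F|:F\subseteq X,\ \mu(B^{d_2}_\delta(B^{d_1}_\delta(F)))>a\}$; for $U\subseteq X$, $(U,d_1,d_2,\mu')$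 means $U$ with restricted pseudometrics (balls taken inside $U$) and unnormalized restriction of $\mu'$. $\mathrm{BICOV}_{\alpha,\kappa,\kappa',\delta}(X,d_1,d_2,\mu)=\min_{\mu'}\max_{U:\mu'(U)\ge\kappa}\mathrm{bicov}_{\kappa'}((U,d_1,d_2,\mu'),\delta)$, minimum over Borel probabilities $\mu'$ with $\|d\mu'/d\mu\|_\infty\le\alpha$, maximum over Borel $U\subseteq X$. *)

From Stdlib Require Import Reals Lra ZArith List Classical.
Open Scope R_scope.

Record metric_space := MetricSpace {
  ms_car :> Type;
  ms_d : ms_car -> ms_car -> R;
  ms_d_nonneg : forall x y, 0 <= ms_d x y;
  ms_d_refl : forall x, ms_d x x = 0;
  ms_d_sep : forall x y, ms_d x y = 0 -> x = y;
  ms_d_sym : forall x y, ms_d x y = ms_d y x;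
  ms_d_tri : forall x y z, ms_d x z <= ms_d x y + ms_d y z
}.

Definition is_open {X : metric_space} (O : X -> Prop) : Prop :=
  forall x, O x -> exists r, 0 < r /\ forall y, ms_d X x y < r -> O y.

Definition compact_space (X : metric_space) : Prop :=
  forall (I : Type) (O : I -> X -> Prop),
    (forall i, is_open (O i)) -> (forall x, exists i, O i x) ->
    exists l : list I, forall x, exists i, In i l /\ O i x.

Definition continuous_map {X Y : metric_space} (f : X -> Y) : Prop :=
  forall x eps, 0 < eps -> exists dl, 0 < dl /\
    forall y, ms_d X x y < dl -> ms_d Y (f x) (f y) < eps.

Inductive borel {X : metric_space} : (X -> Prop) -> Prop :=
  | borel_open : forall O, is_open O -> borel O
  | borel_compl : forall A, borel A -> borel (fun x => ~ A x)
  | borel_cunion : forall A : nat -> X -> Prop,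
      (forall n, borel (A n)) -> borel (fun x => exists n, A n x)
  | borel_ext : forall A B, borel A -> (forall x, A x <-> B x) -> borel B.

Definition borel_map {X Y : metric_space} (f : X -> Y) : Prop :=
  forall B : Y -> Prop, borel B -> borel (fun x => B (f x)).

(** * Borel probability measures (values on non-Borel sets are irrelevant) *)
Record prob_measure (X : metric_space) := ProbMeasure {
  pm :> (X -> Prop) -> R;
  pm_nonneg : forall A, borel A -> 0 <= pm A;
  pm_total : pm (fun _ => True) = 1;
  pm_sigma_add : forall A : nat -> X -> Prop,
    (forall n, borel (A n)) ->
    (forall n m x, n <> m -> A n x -> A m x -> False) ->
    infinite_sum (fun n => pm (A n)) (pm (fun x => exists n, A n x))
}.
Arguments pm {X} _ _.

Record cmpp_system := CMPP {
  sys_space : metric_space;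
  sys_compact : compact_space sys_space;
  sys_T : sys_space -> sys_space;
  sys_Tinv : sys_space -> sys_space;
  sys_T_cont : continuous_map sys_T;
  sys_Tinv_cont : continuous_map sys_Tinv;
  sys_T_Tinv : forall x, sys_T (sys_Tinv x) = x;
  sys_Tinv_T : forall x, sys_Tinv (sys_T x) = x;
  sys_mu : prob_measure sys_space;
  sys_mu_inv : forall A, borel A -> sys_mu (fun x => A (sys_T x)) = sys_mu A
}.

Definition sys_iter (S : cmpp_system) (n : Z) (x : sys_space S) : sys_space S :=
  match n with
  | Z0 => x
  | Zpos p => Nat.iter (Pos.to_nat p) (sys_T S) x
  | Zneg p => Nat.iter (Pos.to_nat p) (sys_Tinv S) x
  end.

(** d_F with F = [a ; a+len) :  sum_{n in F} d(T^n x, T^n x') *)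
Fixpoint dseg (S : cmpp_system) (a : Z) (len : nat)
  (x y : sys_space S) : R :=
  match len with
  | O => 0
  | S k => dseg S a k x y +
      ms_d (sys_space S) (sys_iter S (a + Z.of_nat k) x) (sys_iter S (a + Z.of_nat k) y)
  end.

Definition borel_factor (SX SY : cmpp_system)
  (Phi : sys_space SX -> sys_space SY) : Prop :=
  borel_map Phi /\
  (exists Z : sys_space SX -> Prop, borel Z /\ sys_mu SX Z = 0 /\
     forall x, ~ Z x -> Phi (sys_T SX x) = sys_T SY (Phi x)) /\
  (forall B, borel B -> sys_mu SX (fun x => B (Phi x)) = sys_mu SY B).

(** The set B^{d2}_delta(B^{d1}_delta(F)) computed inside U. *)
Definition bicov_set {X : Type} (d1 d2 : X -> X -> R) (U : X -> Prop)
  (delta : R) (F : list X) : X -> Prop :=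
  fun y => U y /\ exists z, U z /\ d2 z y < delta /\
                   exists x, In x F /\ d1 x z < delta.

(** bicov_a((U,d1,d2,mu'),delta) >= M  (as an element of nat):
    no F subset of U with |F| < M satisfies mu'(B^{d2}(B^{d1}(F))) > a. *)
Definition bicov_ge {X : metric_space} (d1 d2 : X -> X -> R)
  (mu' : prob_measure X) (U : X -> Prop) (a delta : R) (M : nat) : Prop :=
  forall F : list X, (forall x, In x F -> U x) -> (length F < M)%nat ->
    ~ (pm mu' (bicov_set d1 d2 U delta F) > a).

(** Borel probability mu' with || d mu' / d mu ||_oo <= alpha *)
Definition density_bounded {X : metric_space} (mu mu' : prob_measure X)
  (alpha : R) : Prop :=
  forall A, borel A -> pm mu' A <= alpha * pm mu A.

Definition BICOV_ge {X : metric_space} (d1 d2 : X -> X -> R)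
  (mu : prob_measure X) (alpha kappa kappa' delta : R) (M : nat) : Prop :=
  forall mu' : prob_measure X, density_bounded mu mu' alpha ->
    exists U : X -> Prop, borel U /\ pm mu' U >= kappa /\
      bicov_ge d1 d2 mu' U kappa' delta M.

Definition sysBICOV_ge (S : cmpp_system) (N : nat)
  (alpha kappa kappa' r : R) (M : nat) : Prop :=
  BICOV_ge (dseg S (- Z.of_nat N) N) (dseg S 0 N) (sys_mu S)
    alpha kappa kappa' r M.

(* By Lusin's theorem there is a set K of measure close to 1 on which Phi is
   uniformly continuous up to an error beta.  If the orbit segment of x of length N
   avoids the null set where Phi fails to intertwine T and S, each term of
   d^Y(Phi x, Phi z) along the segment is at most beta + (D / eta) d^X plus D for
   every visit of x or z outside K (D the diameter of Y).  By Markov's inequality and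
   invariance of mu, the points visiting the complement of K at least eps N times in
   the past or future window have measure O(mu(~K) / eps).  Off these bad points Phi
   maps delta1 N-neighbourhoods into delta N-neighbourhoods, so pulling back through
   Phi the witness set chosen on Y for the image measure Phi_* mu' and removing the
   bad points yields a witness on X, losing only kappa - kappa1 in measure. *)

From Stdlib Require Import Reals ZArith List Lra Lia Classical.
From Stdlib Require Import FunctionalExtensionality PropExtensionality
  IndefiniteDescription ClassicalEpsilon.
Open Scope R_scope.

Section Topology.
Context {X : metric_space}.
Implicit Types (A B C O : X -> Prop).

Lemma is_open_ext A B : (forall x, A x <-> B x) -> is_open A -> is_open B.
Proof.
  intros E H x hx. destruct (H x (proj2 (E x) hx)) as [r [hr Hr]].
  exists r; split; [exact hr|]. intros y hy. apply E, Hr, hy.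
Qed.

Lemma open_const (P : Prop) : is_open (fun _ : X => P).
Proof. intros x hx; exists 1; split; [lra | auto]. Qed.

Lemma open_ball (c : X) r : is_open (fun y => ms_d X c y < r).
Proof.
  intros y hy. exists (r - ms_d X c y); split; [lra|]. intros z hz.
  pose proof (ms_d_tri X c y z). lra.
Qed.

Lemma open_and A B : is_open A -> is_open B -> is_open (fun x => A x /\ B x).
Proof.
  intros HA HB x [ha hb].
  destruct (HA x ha) as [r1 [h1 H1]], (HB x hb) as [r2 [h2 H2]].
  exists (Rmin r1 r2); split; [apply Rmin_glb_lt; auto|].
  intros y hy. pose proof (Rmin_l r1 r2). pose proof (Rmin_r r1 r2).
  split; [apply H1 | apply H2]; lra.
Qed.

Lemma open_ex {I : Type} (O : I -> X -> Prop) :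
  (forall i, is_open (O i)) -> is_open (fun x => exists i, O i x).
Proof.
  intros H x [i hi]. destruct (H i x hi) as [r [hr Hr]].
  exists r; split; [exact hr|]. intros y hy; exists i; apply Hr, hy.
Qed.

Lemma open_all_lt (O : nat -> X -> Prop) n :
  (forall k, is_open (O k)) -> is_open (fun x => forall k, (k < n)%nat -> O k x).
Proof.
  intro H; induction n as [|n IH].
  - apply (is_open_ext (fun _ => True)); [intro; split; auto; intros; lia | apply open_const].
  - apply (is_open_ext (fun x => (forall k, (k < n)%nat -> O k x) /\ O n x)).
    + intro x; split.
      * intros [h1 h2] k hk. destruct (Nat.eq_dec k n); [subst; auto | apply h1; lia].
      * intro h; split; auto.
    + apply open_and; auto.
Qed.

Definition closed C := is_open (fun x => ~ C x).

Lemma closed_ex_lt (C : nat -> X -> Prop) n :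
  (forall k, closed (C k)) -> closed (fun x => exists k, (k < n)%nat /\ C k x).
Proof.
  intro H. apply (is_open_ext (fun x => forall k, (k < n)%nat -> ~ C k x)).
  - intro x; split; [intros h [k [hk hc]]; exact (h k hk hc) | intros h k hk hc; eauto].
  - apply open_all_lt; auto.
Qed.

Lemma borel_const (P : Prop) : borel (fun _ : X => P).
Proof. apply borel_open, open_const. Qed.

Lemma borel_closed C : closed C -> borel C.
Proof.
  intro H. apply borel_ext with (A := fun x => ~ ~ C x);
    [apply borel_compl, borel_open, H | intro; tauto].
Qed.

Lemma borel_or A B : borel A -> borel B -> borel (fun x => A x \/ B x).
Proof.
  intros HA HB.
  apply borel_ext with (A := fun x => exists n, (match n with O => A | _ => B end) x).
  - apply borel_cunion; intros [|n]; auto.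
  - intro x; split; [intros [[|n] h]; auto | intros [h|h]; [exists O | exists 1%nat]; auto].
Qed.

Lemma borel_and A B : borel A -> borel B -> borel (fun x => A x /\ B x).
Proof.
  intros HA HB. apply borel_ext with (A := fun x => ~ (~ A x \/ ~ B x)).
  - apply borel_compl, borel_or; apply borel_compl; auto.
  - intro x; tauto.
Qed.

Lemma borel_ex_lt (P : nat -> X -> Prop) n :
  (forall k, borel (P k)) -> borel (fun x => exists k, (k < n)%nat /\ P k x).
Proof.
  intro H. apply borel_cunion with (A := fun k x => (k < n)%nat /\ P k x).
  intro k; apply borel_and; [apply borel_const | apply H].
Qed.

Lemma borel_all_lt (P : nat -> X -> Prop) n :
  (forall k, borel (P k)) -> borel (fun x => forall k, (k < n)%nat -> P k x).
Proof.
  intro H. apply borel_ext with (A := fun x => ~ exists k, (k < n)%nat /\ ~ P k x).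
  - apply borel_compl, borel_ex_lt; intro; apply borel_compl; auto.
  - intro x; split; [intros h k hk; apply NNPP; eauto | intros h [k [hk hp]]; auto].
Qed.

End Topology.

Lemma borel_preimage_continuous {X Y : metric_space} (f : X -> Y) :
  continuous_map f -> borel_map f.
Proof.
  intros Hf B HB; induction HB as [O HO|A HA IH|A HA IH|A B HA IH E].
  - apply borel_open. intros x hx. destruct (HO (f x) hx) as [r [hr Hr]].
    destruct (Hf x r hr) as [dl [hdl Hdl]]. exists dl; split; auto.
  - apply borel_compl; auto.
  - apply borel_cunion with (A := fun n x => A n (f x)); auto.
  - apply borel_ext with (A := fun x => A (f x)); auto.
Qed.

Lemma continuous_iter {X : metric_space} (f : X -> X) k :
  continuous_map f -> continuous_map (Nat.iter k f).
Proof.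
  intro Hf; induction k as [|k IH]; intros x eps he; simpl.
  - exists eps; split; auto.
  - destruct (Hf (Nat.iter k f x) eps he) as [d1 [h1 H1]].
    destruct (IH x d1 h1) as [d2 [h2 H2]]. exists d2; split; auto.
Qed.

Definition pushforward {X Y : metric_space} (mu : prob_measure X) (f : X -> Y)
  (Hf : borel_map f) : prob_measure Y :=
  ProbMeasure Y (fun B => pm mu (fun x => B (f x)))
    (fun B hB => pm_nonneg X mu _ (Hf B hB)) (pm_total X mu)
    (fun A hA hdj => pm_sigma_add X mu (fun n x => A n (f x)) (fun n => Hf _ (hA n))
                       (fun n m x h => hdj n m (f x) h)).

Fixpoint sum_lt (f : nat -> R) (n : nat) : R :=
  match n with O => 0 | S k => sum_lt f k + f k end.

Lemma sum_lt_le f g n : (forall k, (k < n)%nat -> f k <= g k) -> sum_lt f n <= sum_lt g n.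
Proof.
  induction n as [|n IH]; intro H; simpl; [lra|].
  pose proof (H n ltac:(lia)). assert (sum_lt f n <= sum_lt g n) by (apply IH; intros; apply H; lia).
  lra.
Qed.

Lemma sum_lt_plus f g n : sum_lt (fun k => f k + g k) n = sum_lt f n + sum_lt g n.
Proof. induction n as [|n IH]; simpl; [ring | rewrite IH; ring]. Qed.

Lemma sum_lt_const n c : sum_lt (fun _ => c) n = INR n * c.
Proof. induction n as [|n IH]; simpl sum_lt; [simpl; ring | rewrite IH, S_INR; ring]. Qed.

Lemma sum_lt_le_const f c n : (forall k, (k < n)%nat -> f k <= c) -> sum_lt f n <= INR n * c.
Proof. intro H. rewrite <- sum_lt_const. apply sum_lt_le; auto. Qed.

Lemma sum_lt_ge_const f c n : (forall k, (k < n)%nat -> c <= f k) -> INR n * c <= sum_lt f n.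
Proof. intro H. rewrite <- sum_lt_const. apply sum_lt_le; auto. Qed.

Lemma sum_lt_geometric_le c n : 0 <= c -> sum_lt (fun k => c * (/ 2) ^ S k) n <= c.
Proof.
  intro hc.
  assert (E : sum_lt (fun k => c * (/ 2) ^ S k) n = c * (1 - (/ 2) ^ n)).
  { induction n as [|n IH]; cbn [sum_lt]; [simpl; ring | rewrite IH; simpl; field]. }
  rewrite E. pose proof (pow_lt (/ 2) n ltac:(lra)). nra.
Qed.

Section Measure.
Context {X : metric_space} (mu : prob_measure X).
Implicit Types A B : X -> Prop.

Lemma pm_ext A B : (forall x, A x <-> B x) -> pm mu A = pm mu B.
Proof.
  intro E. f_equal. apply functional_extensionality; intro x.
  apply propositional_extensionality, E.
Qed.

Lemma pm_False : pm mu (fun _ => False) = 0.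
Proof.
  pose proof (pm_sigma_add X mu (fun _ _ => False) (fun _ => borel_const False)
      (fun _ _ _ _ h _ => h)) as H; cbv beta in H.
  rewrite (pm_ext (fun _ => exists _ : nat, False) (fun _ => False)) in H
    by (intro; split; [intros [_ h]; exact h | tauto]).
  set (c := pm mu (fun _ => False)) in *.
  destruct (Req_dec c 0) as [e|e]; [exact e|].
  (* the partial sums [c * (n + 1)] can only converge to [c] if [c = 0] *)
  destruct (H (Rabs c)) as [N HN]; [apply Rabs_pos_lt; auto|].
  specialize (HN (S N) ltac:(lia)). rewrite sum_cte in HN. unfold Rdist in HN.
  replace (c * INR (S (S N)) - c) with (c * INR (S N)) in HN by (rewrite !S_INR; ring).
  rewrite Rabs_mult, (Rabs_right (INR (S N))) in HN by (apply Rle_ge, pos_INR).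
  assert (1 <= INR (S N)) by (rewrite S_INR; pose proof (pos_INR N); lra).
  pose proof (Rabs_pos c). nra.
Qed.

Lemma pm_or_disjoint A B : borel A -> borel B -> (forall x, A x -> B x -> False) ->
  pm mu (fun x => A x \/ B x) = pm mu A + pm mu B.
Proof.
  intros HA HB D.
  set (s := fun n : nat => match n with O => A | 1%nat => B | _ => fun _ : X => False end).
  assert (Hs : forall n, borel (s n)) by (intros [|[|n]]; simpl; auto using borel_const).
  assert (Hd : forall n m x, n <> m -> s n x -> s m x -> False).
  { intros [|[|n]] [|[|m]] x hnm; simpl; try tauto; try lia; intros; eauto. }
  pose proof (pm_sigma_add X mu s Hs Hd) as H.
  rewrite (pm_ext (fun x => exists n, s n x) (fun x => A x \/ B x)) in H.
  2:{ intro x; split; [intros [[|[|n]] h]; simpl in h; tauto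
                     | intros [h|h]; [exists O | exists 1%nat]; exact h]. }
  apply (uniqueness_sum _ _ _ H). intros eps Heps; exists 1%nat; intros n hn.
  assert (E : forall k, sum_f_R0 (fun n => pm mu (s n)) (S k) = pm mu A + pm mu B).
  { induction k as [|k IH]; simpl; [reflexivity|]. simpl in IH. rewrite IH, pm_False; ring. }
  destruct n; [lia|]. rewrite E. unfold Rdist. rewrite Rminus_diag, Rabs_R0; lra.
Qed.

Lemma pm_diff A B : borel A -> borel B -> (forall x, A x -> B x) ->
  pm mu (fun x => B x /\ ~ A x) = pm mu B - pm mu A.
Proof.
  intros HA HB S.
  rewrite (pm_ext B (fun x => A x \/ (B x /\ ~ A x)))
    by (intro x; split; [tauto | intros [h|h]; auto; tauto]).
  rewrite pm_or_disjoint; [ring | auto | apply borel_and, borel_compl; auto | tauto].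
Qed.

Lemma pm_mono A B : borel A -> borel B -> (forall x, A x -> B x) -> pm mu A <= pm mu B.
Proof.
  intros HA HB S. pose proof (pm_diff A B HA HB S).
  pose proof (pm_nonneg X mu (fun x => B x /\ ~ A x) ltac:(apply borel_and, borel_compl; auto)).
  lra.
Qed.

Lemma pm_or_le A B : borel A -> borel B -> pm mu (fun x => A x \/ B x) <= pm mu A + pm mu B.
Proof.
  intros HA HB.
  rewrite (pm_ext (fun x => A x \/ B x) (fun x => A x \/ (B x /\ ~ A x))) by (intro x; tauto).
  assert (HB' : borel (fun x => B x /\ ~ A x)) by (apply borel_and, borel_compl; auto).
  rewrite pm_or_disjoint; [|auto|auto|tauto].
  assert (pm mu (fun x => B x /\ ~ A x) <= pm mu B) by (apply pm_mono; auto; tauto).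
  lra.
Qed.

Lemma pm_ex_lt_le (B : nat -> X -> Prop) n : (forall k, borel (B k)) ->
  pm mu (fun x => exists k, (k < n)%nat /\ B k x) <= sum_lt (fun k => pm mu (B k)) n.
Proof.
  intro HB; induction n as [|n IH]; simpl.
  - rewrite (pm_ext _ (fun _ => False)), pm_False by (intro; split; [intros [k [h _]]; lia | tauto]).
    lra.
  - rewrite (pm_ext _ (fun x => (exists k, (k < n)%nat /\ B k x) \/ B n x)).
    + eapply Rle_trans; [apply pm_or_le; auto using borel_ex_lt|]. lra.
    + intro x; split.
      * intros [k [hk h]]. destruct (Nat.eq_dec k n); [subst; auto | left; exists k; split; auto; lia].
      * intros [[k [hk h]]|h]; [exists k; split; auto; lia | exists n; auto].
Qed.

Lemma pm_ex_lt_disjoint (B : nat -> X -> Prop) n : (forall k, borel (B k)) ->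
  (forall i j x, i <> j -> B i x -> B j x -> False) ->
  pm mu (fun x => exists k, (k < n)%nat /\ B k x) = sum_lt (fun k => pm mu (B k)) n.
Proof.
  intros HB Hd; induction n as [|n IH]; simpl.
  - rewrite (pm_ext _ (fun _ => False)) by (intro; split; [intros [k [h _]]; lia | tauto]).
    apply pm_False.
  - rewrite (pm_ext _ (fun x => (exists k, (k < n)%nat /\ B k x) \/ B n x)).
    + rewrite pm_or_disjoint, IH; auto using borel_ex_lt.
      intros x [k [hk h]] h'. apply (Hd k n x); auto; lia.
    + intro x; split.
      * intros [k [hk h]]. destruct (Nat.eq_dec k n); [subst; auto | left; exists k; split; auto; lia].
      * intros [[k [hk h]]|h]; [exists k; split; auto; lia | exists n; auto].
Qed.

Lemma pm_increasing_union (A : nat -> X -> Prop) : (forall n, borel (A n)) ->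
  (forall n x, A n x -> A (S n) x) -> forall eps, 0 < eps ->
  exists K, pm mu (fun x => exists n, A n x) <= pm mu (A K) + eps.
Proof.
  intros HA Hinc eps Heps.
  assert (mon : forall n m x, (n <= m)%nat -> A n x -> A m x) by (intros n m x h; induction h; auto).
  set (D := fun n : nat => match n with O => A O | S k => fun x => A (S k) x /\ ~ A k x end).
  assert (HD : forall n, borel (D n)) by (intros [|k]; simpl; auto; apply borel_and, borel_compl; auto).
  assert (Dd : forall n m x, n <> m -> D n x -> D m x -> False).
  { assert (forall n m x, (n < m)%nat -> D n x -> D m x -> False).
    { intros n [|m] x h; [lia|]. intros h1 [_ h3]. apply h3, (mon n m); [lia|]. destruct n; apply h1. }
    intros n m x h; destruct (Nat.lt_total n m) as [h'|[h'|h']]; eauto; lia. }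
  pose proof (pm_sigma_add X mu D HD Dd) as H.
  rewrite (pm_ext (fun x => exists n, D n x) (fun x => exists n, A n x)) in H.
  2:{ intro x; split.
      - intros [[|n] h]; [exists O | exists (S n)]; apply h.
      - intros [n h]. induction n as [|n IH]; [exists O; exact h|].
        destruct (classic (A n x)) as [h'|h']; auto. exists (S n); simpl; auto. }
  assert (P : forall n, sum_f_R0 (fun k => pm mu (D k)) n = pm mu (A n)).
  { induction n as [|n IH]; simpl; auto. rewrite IH. symmetry.
    rewrite (pm_ext (A (S n)) (fun x => A n x \/ (A (S n) x /\ ~ A n x)))
      by (intro x; split; [tauto | intros [h|h]; auto; tauto]).
    apply pm_or_disjoint; [auto | apply borel_and, borel_compl; auto | tauto]. }
  destruct (H eps Heps) as [N HN]. exists N. specialize (HN N (le_n _)).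
  rewrite P in HN. unfold Rdist in HN. apply Rabs_def2 in HN. lra.
Qed.

Lemma pm_union_minus_finite_le (O C : nat -> X -> Prop) K :
  (forall n, borel (O n)) -> (forall n, borel (C n)) ->
  pm mu (fun x => (exists n, O n x) /\ ~ exists n, (n < K)%nat /\ C n x)
  <= pm mu (fun x => exists n, O n x) - pm mu (fun x => exists n, (n < K)%nat /\ O n x)
     + sum_lt (fun n => pm mu (fun x => O n x /\ ~ C n x)) K.
Proof.
  intros bO bC.
  assert (bU : borel (fun x => exists n, O n x)) by (apply borel_cunion; auto).
  assert (bP : borel (fun x => exists n, (n < K)%nat /\ O n x)) by (apply borel_ex_lt; auto).
  assert (bD : forall n, borel (fun x => O n x /\ ~ C n x))
    by (intro; apply borel_and, borel_compl; auto).
  rewrite <- pm_diff by (auto; intros x [n [_ h]]; exists n; exact h).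
  eapply Rle_trans; [|apply Rplus_le_compat_l, pm_ex_lt_le, bD].
  eapply Rle_trans; [|apply pm_or_le; [apply borel_and, borel_compl; auto | apply borel_ex_lt; auto]].
  apply pm_mono.
  - apply borel_and; [auto | apply borel_compl, borel_ex_lt; auto].
  - apply borel_or; [apply borel_and, borel_compl; auto | apply borel_ex_lt; auto].
  - intros x [h1 h2].
    destruct (classic (exists n, (n < K)%nat /\ O n x)) as [[n [hn ho]]|hp]; [right | left; auto].
    exists n; repeat split; auto. intro hc; apply h2; eauto.
Qed.

End Measure.

Section Regularity.
Context {X : metric_space} (mu : prob_measure X).

Definition approximable (A : X -> Prop) := forall eps, 0 < eps ->
  exists C O : X -> Prop, closed C /\ is_open O /\ (forall x, C x -> A x) /\
    (forall x, A x -> O x) /\ pm mu (fun x => O x /\ ~ C x) <= eps.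

Lemma approximable_open O : is_open O -> approximable O.
Proof.
  intros HO eps Heps.
  set (C := fun (k : nat) (x : X) => forall y, ~ O y -> / INR (S k) <= ms_d X x y).
  assert (Cc : forall k, closed (C k)).
  { intro k. apply (is_open_ext (fun x => exists y, ~ O y /\ ms_d X x y < / INR (S k))).
    - intro x; unfold C; split.
      + intros [y [hy hd]] h. specialize (h y hy). lra.
      + intro h. apply NNPP; intro h'. apply h. intros y hy.
        apply Rnot_lt_le. intro hl. apply h'; eauto.
    - intros x [y [hy hd]]. exists (/ INR (S k) - ms_d X x y); split; [lra|].
      intros x' hx'. exists y; split; auto.
      pose proof (ms_d_tri X x' x y). rewrite (ms_d_sym X x' x) in *. lra. }
  assert (CO : forall k x, C k x -> O x).
  { intros k x h. apply NNPP; intro h'. specialize (h x h'). rewrite ms_d_refl in h.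
    assert (0 < / INR (S k)) by (apply Rinv_0_lt_compat, lt_0_INR; lia). lra. }
  assert (Cinc : forall k x, C k x -> C (S k) x).
  { intros k x h y hy. eapply Rle_trans; [|exact (h y hy)].
    apply Rinv_le_contravar; [apply lt_0_INR; lia | apply le_INR; lia]. }
  assert (Cu : forall x, (exists k, C k x) <-> O x).
  { intro x; split; [intros [k h]; eauto|]. intro h. destruct (HO x h) as [r [hr Hr]].
    destruct (archimed_cor1 r hr) as [N [hN hN0]]. exists (pred N). unfold C.
    replace (S (pred N)) with N by lia. intros y hy. apply Rnot_lt_le; intro hl. apply hy, Hr. lra. }
  destruct (pm_increasing_union mu C (fun k => borel_closed _ (Cc k)) Cinc eps Heps) as [K HK].
  rewrite (pm_ext mu _ O Cu) in HK.
  exists (C K), O; repeat split; auto; [intros; eapply CO; eauto|].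
  rewrite (pm_diff mu (C K) O); [lra | apply borel_closed, Cc | apply borel_open, HO | eauto].
Qed.

Lemma approximable_compl A : approximable A -> approximable (fun x => ~ A x).
Proof.
  intros HA eps Heps. destruct (HA eps Heps) as [C [O [hC [hO [h1 [h2 h3]]]]]].
  exists (fun x => ~ O x), (fun x => ~ C x); repeat split.
  - apply (is_open_ext O); [intro; tauto | exact hO].
  - exact hC.
  - intros x h h'. apply h, h2, h'.
  - intros x h h'. apply h, h1, h'.
  - rewrite (pm_ext mu _ (fun x => O x /\ ~ C x)); [exact h3 | intro; tauto].
Qed.

Lemma approximable_cunion (A : nat -> X -> Prop) :
  (forall n, approximable (A n)) -> approximable (fun x => exists n, A n x).
Proof.
  intros HA eps Heps.
  assert (Hc : forall n, exists p : (X -> Prop) * (X -> Prop), closed (fst p) /\ is_open (snd p) /\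
     (forall x, fst p x -> A n x) /\ (forall x, A n x -> snd p x) /\
     pm mu (fun x => snd p x /\ ~ fst p x) <= eps / 2 * (/ 2) ^ S n).
  { intro n. destruct (HA n (eps / 2 * (/ 2) ^ S n)) as [C [O h]].
    { apply Rmult_lt_0_compat; [lra | apply pow_lt; lra]. }
    exists (C, O); exact h. }
  apply functional_choice in Hc. destruct Hc as [f Hf].
  set (Cn := fun n => fst (f n)). set (On := fun n => snd (f n)).
  assert (bC : forall n, borel (Cn n)) by (intro n; apply borel_closed, Hf).
  assert (bO : forall n, borel (On n)) by (intro n; apply borel_open, Hf).
  destruct (pm_increasing_union mu (fun K x => exists n, (n < K)%nat /\ On n x))
    with (eps := eps / 2) as [K HK]; [intro; apply borel_ex_lt; auto | | lra |].
  { intros K x [n [hn h]]; exists n; split; auto; lia. }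
  rewrite (pm_ext mu _ (fun x => exists n, On n x)) in HK
    by (intro x; split; [intros [_ [n [_ h]]]; exists n; exact h
                        | intros [n h]; exists (S n), n; auto]).
  exists (fun x => exists n, (n < K)%nat /\ Cn n x), (fun x => exists n, On n x); repeat split.
  - apply closed_ex_lt; intro; apply Hf.
  - apply open_ex; intro; apply Hf.
  - intros x [n [_ h]]; exists n; apply (Hf n), h.
  - intros x [n h]; exists n; apply (Hf n), h.
  - eapply Rle_trans; [apply pm_union_minus_finite_le; auto|].
    assert (sum_lt (fun n => pm mu (fun x => On n x /\ ~ Cn n x)) K <= eps / 2).
    { eapply Rle_trans; [apply sum_lt_le; intros n _; apply (Hf n)|].
      apply sum_lt_geometric_le; lra. }
    lra.
Qed.

Lemma borel_approximable A : borel A -> approximable A.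
Proof.
  induction 1 as [O HO|A HA IH|A HA IH|A B HA IH E].
  - apply approximable_open, HO.
  - apply approximable_compl, IH.
  - apply approximable_cunion, IH.
  - intros eps Heps. destruct (IH eps Heps) as [C [O [hC [hO [h1 [h2 h3]]]]]].
    exists C, O; repeat split; auto; intros x h; [apply E, h1, h | apply h2, E, h].
Qed.

Lemma inner_closed_approx A : borel A -> forall eps, 0 < eps ->
  exists C, closed C /\ (forall x, C x -> A x) /\ pm mu (fun x => A x /\ ~ C x) <= eps.
Proof.
  intros HA eps Heps. destruct (borel_approximable A HA eps Heps) as [C [O [hC [hO [h1 [h2 h3]]]]]].
  exists C; repeat split; auto. eapply Rle_trans; [|exact h3]. apply pm_mono.
  - apply borel_and, borel_compl, borel_closed; auto.
  - apply borel_and; [apply borel_open | apply borel_compl, borel_closed]; auto.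
  - intros x [a b]; auto.
Qed.

End Regularity.

Lemma list_upper_bound {A : Type} (f : A -> R) (l : list A) :
  exists B, forall a, In a l -> f a <= B.
Proof.
  induction l as [|a l [B HB]]; [exists 0; intros a [] |].
  exists (Rmax (f a) B). intros b [<-|h];
    [apply Rmax_l | eapply Rle_trans; [apply HB, h | apply Rmax_r]].
Qed.

Lemma list_pos_lower_bound {A : Type} (f : A -> R) (l : list A) :
  (forall a, In a l -> 0 < f a) -> exists e, 0 < e /\ forall a, In a l -> e <= f a.
Proof.
  induction l as [|a l IH]; intro H; [exists 1; split; [lra | intros a []] |].
  destruct IH as [e [he He]]; [intros b hb; apply H; right; exact hb|].
  exists (Rmin (f a) e); split; [apply Rmin_glb_lt; auto; apply H; left; reflexivity|].
  intros b [<-|h]; [apply Rmin_l | eapply Rle_trans; [apply Rmin_r | apply He, h]].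
Qed.

Section Compact.
Context {X : metric_space} (HX : compact_space X).

Lemma compact_diameter_bounded : exists D, 0 < D /\ forall x y : X, ms_d X x y <= D.
Proof.
  destruct (HX X (fun c y => ms_d X c y < 1) (fun c => open_ball c 1)) as [l Hl].
  { intro y; exists y; rewrite ms_d_refl; lra. }
  destruct (list_upper_bound (fun p => ms_d X (fst p) (snd p)) (list_prod l l)) as [B HB].
  exists (Rabs B + 2); split; [pose proof (Rabs_pos B); lra|]. intros x y.
  destruct (Hl x) as [a [ha da]], (Hl y) as [b [hb db]].
  pose proof (HB (a, b) (in_prod l l a b ha hb)). simpl in *.
  pose proof (ms_d_tri X x a y). pose proof (ms_d_tri X a b y). pose proof (Rle_abs B).
  rewrite (ms_d_sym X x a) in *. lra.
Qed.

Lemma lebesgue_number {I : Type} (O : I -> X -> Prop) :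
  (forall i, is_open (O i)) -> (forall x, exists i, O i x) ->
  exists eta, 0 < eta /\ forall x, exists i, forall y, ms_d X x y < eta -> O i y.
Proof.
  intros HO Hcov.
  set (inside := fun c r => 0 < r /\ exists i, forall y, ms_d X c y < 2 * r -> O i y).
  set (J := {p : X * R | inside (fst p) (snd p)}).
  destruct (HX J (fun p y => ms_d X (fst (proj1_sig p)) y < snd (proj1_sig p))) as [l Hl].
  { intro p; apply open_ball. }
  { intro x. destruct (Hcov x) as [i hi]. destruct (HO i x hi) as [r [hr Hr]].
    assert (P : inside x (r / 2)) by (split; [lra | exists i; intros y hy; apply Hr; lra]).
    exists (exist _ (x, r / 2) P); simpl. rewrite ms_d_refl; lra. }
  destruct (list_pos_lower_bound (fun p : J => snd (proj1_sig p)) l) as [eta [he He]].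
  { intros p _; apply (proj2_sig p). }
  exists eta; split; [exact he|]. intros x.
  destruct (Hl x) as [p [hp hpx]]. destruct (proj2 (proj2_sig p)) as [i Hi].
  exists i. intros y hy. apply Hi.
  pose proof (He p hp). pose proof (ms_d_tri X (fst (proj1_sig p)) x y).
  lra.
Qed.

Lemma closed_family_separated (C : nat -> X -> Prop) n :
  (forall k, closed (C k)) -> (forall i x, C i x -> (i < n)%nat) ->
  (forall i j x, C i x -> C j x -> i = j) ->
  exists eta, 0 < eta /\ forall i j x z, C i x -> C j z -> ms_d X x z < eta -> i = j.
Proof.
  intros HC Hn Hd.
  (* a Lebesgue number for the open cover by the complements of all but one of the sets *)
  set (W := fun i x => forall j, (j < n)%nat -> j <> i -> ~ C j x).
  destruct (lebesgue_number W) as [eta [he He]].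
  - intro i. apply open_all_lt. intro j. destruct (Nat.eq_dec j i) as [e|e].
    + apply (is_open_ext (fun _ => True)); [intro; tauto | apply open_const].
    + apply (is_open_ext (fun x => ~ C j x)); [intro; tauto | apply HC].
  - intro x. destruct (classic (exists i, C i x)) as [[i hi]|h].
    + exists i. intros j _ hji hj. apply hji, (Hd j i x hj hi).
    + exists 0%nat. intros j _ _ hj. apply h; eauto.
  - exists eta; split; [exact he|]. intros i j x z hx hz hxz.
    destruct (He x) as [k Hk].
    assert (Ox : W k x) by (apply Hk; rewrite ms_d_refl; lra).
    assert (Oz : W k z) by (apply Hk, hxz).
    destruct (Nat.eq_dec i k) as [->|hik]; [|exfalso; exact (Ox i (Hn i x hx) hik hx)].
    destruct (Nat.eq_dec j k) as [->|hjk]; [reflexivity | exfalso; exact (Oz j (Hn j z hz) hjk hz)].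
Qed.

End Compact.

Lemma least_witness (P : nat -> Prop) k : P k -> exists i, P i /\ forall j, (j < i)%nat -> ~ P j.
Proof.
  induction k as [k IH] using lt_wf_ind. intro hk.
  destruct (classic (exists j, (j < k)%nat /\ P j)) as [[j [hj hp]]|h].
  - exact (IH j hj hp).
  - exists k; split; [exact hk | intros j hj hp; apply h; eauto].
Qed.

Lemma borel_partition_small_image {X Y : metric_space} (Phi : X -> Y) :
  compact_space Y -> borel_map Phi -> forall beta, 0 < beta ->
  exists (n : nat) (A : nat -> X -> Prop),
    (forall i, borel (A i)) /\ (forall i x, A i x -> (i < n)%nat) /\ (forall x, exists i, A i x) /\
    (forall i j x, A i x -> A j x -> i = j) /\
    (forall i x z, A i x -> A i z -> ms_d Y (Phi x) (Phi z) < beta).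
Proof.
  intros HY HPhi beta hbeta.
  destruct (HY Y (fun c y => ms_d Y c y < beta / 2) (fun c => open_ball c _)) as [l Hl].
  { intro y; exists y; rewrite ms_d_refl; lra. }
  set (B := fun i x => match nth_error l i with
                       | Some c => ms_d Y c (Phi x) < beta / 2 | None => False end).
  assert (bB : forall i, borel (B i)).
  { intro i; unfold B; destruct (nth_error l i) as [c|].
    - apply (HPhi (fun y => ms_d Y c y < beta / 2)), borel_open, open_ball.
    - apply borel_const. }
  exists (length l), (fun i x => B i x /\ forall j, (j < i)%nat -> ~ B j x).
  split; [|split; [|split; [|split]]].
  - intro i; apply borel_and; [auto | apply borel_all_lt; intro; apply borel_compl; auto].
  - intros i x [h _]. unfold B in h. apply nth_error_Some.
    destruct (nth_error l i); [discriminate | contradiction].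
  - intro x. destruct (Hl (Phi x)) as [c [hc hd]]. destruct (In_nth_error l c hc) as [k hk].
    apply (least_witness (fun i => B i x) k). unfold B; rewrite hk; exact hd.
  - intros i j x [hi mi] [hj mj].
    destruct (Nat.lt_total i j) as [h|[h|h]];
      [exfalso; exact (mj i h hi) | exact h | exfalso; exact (mi j h hj)].
  - intros i x z [bx _] [bz _]. unfold B in bx, bz.
    destruct (nth_error l i) as [c|]; [|contradiction].
    pose proof (ms_d_tri Y (Phi x) c (Phi z)). rewrite (ms_d_sym Y (Phi x) c) in *. lra.
Qed.

Lemma lusin {X Y : metric_space} (mu : prob_measure X) (Phi : X -> Y) :
  compact_space X -> compact_space Y -> borel_map Phi ->
  forall beta tau, 0 < beta -> 0 < tau ->
  exists K, borel K /\ pm mu (fun x => ~ K x) <= tau /\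
    exists eta, 0 < eta /\
      forall x z, K x -> K z -> ms_d X x z < eta -> ms_d Y (Phi x) (Phi z) < beta.
Proof.
  intros HX HY HPhi beta tau hbeta htau.
  destruct (borel_partition_small_image Phi HY HPhi beta hbeta)
    as [n [A [bA [A_lt [A_cover [A_disj A_small]]]]]].
  set (eps := tau / (INR n + 1)).
  assert (hn : 0 <= INR n) by apply pos_INR.
  assert (heps : 0 < eps) by (unfold eps; apply Rdiv_lt_0_compat; lra).
  assert (HC : forall i, exists C, closed C /\ (forall x, C x -> A i x) /\
                                   pm mu (fun x => A i x /\ ~ C x) <= eps)
    by (intro i; apply inner_closed_approx; auto).
  apply functional_choice in HC. destruct HC as [C HC].
  assert (CA : forall i x, C i x -> A i x) by (intro i; apply HC).
  assert (bD : forall i, borel (fun x => A i x /\ ~ C i x))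
    by (intro; apply borel_and, borel_compl, borel_closed, HC; auto).
  exists (fun x => exists i, C i x). split; [|split].
  - apply borel_cunion; intro; apply borel_closed, HC.
  - apply Rle_trans with (pm mu (fun x => exists i, (i < n)%nat /\ (A i x /\ ~ C i x))).
    + apply pm_mono; [apply borel_compl, borel_cunion; intro; apply borel_closed, HC
                     | apply borel_ex_lt, bD |].
      intros x hx. destruct (A_cover x) as [i hi].
      exists i; split; [exact (A_lt i x hi) |].
      split; [exact hi | intro hc; apply hx; exists i; exact hc].
    + eapply Rle_trans; [apply pm_ex_lt_le, bD|].
      eapply Rle_trans; [apply sum_lt_le_const with (c := eps); intros; apply HC|].
      unfold eps. apply (Rmult_le_reg_r (INR n + 1)); [lra|].
      field_simplify; [nra | lra].
  - destruct (closed_family_separated HX C n (fun k => proj1 (HC k))) as [eta [he Heta]].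
    + intros i x h; eapply A_lt, CA, h.
    + intros i j x hi hj; apply (A_disj i j x); apply CA; auto.
    + exists eta; split; [exact he|]. intros x z [i hx] [j hz] hd.
      pose proof (Heta i j x z hx hz hd); subst j. apply (A_small i); apply CA; auto.
Qed.

Lemma pm_preimage_iter {X : metric_space} (mu : prob_measure X) (f : X -> X) :
  continuous_map f -> (forall B, borel B -> pm mu (fun x => B (f x)) = pm mu B) ->
  forall k B, borel B -> pm mu (fun x => B (Nat.iter k f x)) = pm mu B.
Proof.
  intros Hf Hinv k; induction k as [|k IH]; intros B HB; simpl; [reflexivity|].
  rewrite (IH (fun y => B (f y))); [apply Hinv, HB | apply (borel_preimage_continuous f Hf), HB].
Qed.

Lemma borel_bicov_set {X : metric_space} (d1 d2 : X -> X -> R) U delta F :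
  (forall z r, is_open (fun y => d2 z y < r)) -> borel U -> borel (bicov_set d1 d2 U delta F).
Proof.
  intros Hd hU. apply borel_and; [exact hU|]. apply borel_open.
  intros y [z [hz [hzy hx]]]. destruct (Hd z delta y hzy) as [r [hr Hr]].
  exists r; split; [exact hr|]. intros y' hy'. exists z; auto.
Qed.

Lemma BICOV_ge_pullback {X Y : metric_space} (mu : prob_measure X) (nu : prob_measure Y)
  (Phi : X -> Y) (d1 d2 : X -> X -> R) (e1 e2 : Y -> Y -> R) (G : X -> Prop)
  (alpha alpha1 kappa kappa1 kappa' r r1 : R) (M : nat) (HPhi : borel_map Phi) :
  (forall B, borel B -> pm mu (fun x => B (Phi x)) = pm nu B) ->
  (forall z s, is_open (fun y => d2 z y < s)) -> (forall z s, is_open (fun y => e2 z y < s)) ->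
  alpha1 <= alpha -> borel G -> alpha1 * pm mu (fun x => ~ G x) <= kappa - kappa1 ->
  (forall x z, G x -> G z -> d1 x z < r1 -> e1 (Phi x) (Phi z) < r) ->
  (forall x z, G x -> G z -> d2 x z < r1 -> e2 (Phi x) (Phi z) < r) ->
  BICOV_ge e1 e2 nu alpha kappa kappa' r M -> BICOV_ge d1 d2 mu alpha1 kappa1 kappa' r1 M.
Proof.
  intros Hpush Hd2 He2 ha hG hGm H1 H2 HY mu' Hmu'.
  destruct (HY (pushforward mu' Phi HPhi)) as [UY [hUY [hUYm hUYb]]].
  { intros B hB. simpl. rewrite <- Hpush by exact hB.
    pose proof (Hmu' _ (HPhi B hB)). pose proof (pm_nonneg _ mu _ (HPhi B hB)). nra. }
  simpl in hUYm. set (U := fun x => UY (Phi x) /\ G x).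
  assert (hU : borel U) by (apply borel_and; [apply HPhi |]; auto).
  assert (hnG : borel (fun x => ~ G x)) by (apply borel_compl, hG).
  exists U; split; [exact hU | split].
  - assert (pm mu' (fun x => UY (Phi x)) <= pm mu' U + pm mu' (fun x => ~ G x)).
    { eapply Rle_trans; [|apply pm_or_le; auto].
      apply pm_mono; [apply HPhi, hUY | apply borel_or; auto|].
      intros x h. destruct (classic (G x)); [left; split | right]; auto. }
    pose proof (Hmu' _ hnG). lra.
  - intros F HF hlen hgt. apply (hUYb (map Phi F)).
    + intros y hy. apply in_map_iff in hy. destruct hy as [x [<- hx]]. apply HF, hx.
    + rewrite length_map; exact hlen.
    + simpl. eapply Rlt_le_trans; [exact hgt|]. apply pm_mono.
      * apply borel_bicov_set; auto.
      * apply HPhi, borel_bicov_set; auto.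
      * intros y [[hy1 hy2] [z [[hz1 hz2] [hzy [x [hxF hxz]]]]]].
        split; [exact hy1|]. exists (Phi z); split; [exact hz1|]. split; [apply H2; auto|].
        exists (Phi x); split; [apply in_map, hxF | apply H1; auto; apply HF, hxF].
Qed.

Section System.
Variable S : cmpp_system.
Local Notation X := (sys_space S).
Local Notation mu := (sys_mu S).

Lemma continuous_sys_iter n : continuous_map (sys_iter S n).
Proof.
  destruct n; simpl.
  - intros x eps he; exists eps; split; auto.
  - apply continuous_iter, sys_T_cont.
  - apply continuous_iter, sys_Tinv_cont.
Qed.

Lemma borel_preimage_sys_iter n B : borel B -> borel (fun x => B (sys_iter S n x)).
Proof. apply borel_preimage_continuous, continuous_sys_iter. Qed.

Lemma pm_preimage_Tinv B : borel B -> pm mu (fun x => B (sys_Tinv S x)) = pm mu B.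
Proof.
  intro HB.
  assert (HW : borel (fun x => B (sys_Tinv S x)))
    by (apply (borel_preimage_continuous _ (sys_Tinv_cont S)), HB).
  rewrite <- (sys_mu_inv S _ HW). apply pm_ext. intro x; rewrite sys_Tinv_T; tauto.
Qed.

Lemma pm_preimage_T_iter k B : borel B -> pm mu (fun x => B (Nat.iter k (sys_T S) x)) = pm mu B.
Proof. apply pm_preimage_iter; [apply sys_T_cont | apply sys_mu_inv]. Qed.

Lemma pm_preimage_Tinv_iter k B : borel B -> pm mu (fun x => B (Nat.iter k (sys_Tinv S) x)) = pm mu B.
Proof. apply pm_preimage_iter; [apply sys_Tinv_cont | apply pm_preimage_Tinv]. Qed.

Lemma pm_preimage_sys_iter n B : borel B -> pm mu (fun x => B (sys_iter S n x)) = pm mu B.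
Proof. destruct n; simpl; auto using pm_preimage_T_iter, pm_preimage_Tinv_iter. Qed.

Lemma dseg_triangle a L x y z : dseg S a L x z <= dseg S a L x y + dseg S a L y z.
Proof.
  induction L as [|L IH]; simpl; [lra|].
  pose proof (ms_d_tri X (sys_iter S (a + Z.of_nat L) x) (sys_iter S (a + Z.of_nat L) y)
                         (sys_iter S (a + Z.of_nat L) z)). lra.
Qed.

Lemma dseg_small a L y eps : 0 < eps ->
  exists r, 0 < r /\ forall y', ms_d X y y' < r -> dseg S a L y y' < eps.
Proof.
  revert eps; induction L as [|L IH]; intros eps he; simpl.
  - exists 1; split; [lra | intros; lra].
  - destruct (IH (eps / 2) ltac:(lra)) as [r1 [h1 H1]].
    destruct (continuous_sys_iter (a + Z.of_nat L) y (eps / 2) ltac:(lra)) as [r2 [h2 H2]].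
    exists (Rmin r1 r2); split; [apply Rmin_glb_lt; auto|]. intros y' hy.
    pose proof (Rmin_l r1 r2). pose proof (Rmin_r r1 r2).
    specialize (H1 y' ltac:(lra)). specialize (H2 y' ltac:(lra)). lra.
Qed.

Lemma open_dseg_ball a L z r : is_open (fun y => dseg S a L z y < r).
Proof.
  intros y hy. destruct (dseg_small a L y (r - dseg S a L z y) ltac:(lra)) as [r' [h' H']].
  exists r'; split; [exact h'|]. intros y' hy'.
  pose proof (dseg_triangle a L z y y'). specialize (H' y' hy'). lra.
Qed.

End System.

Definition indic (P : Prop) : nat := if excluded_middle_informative P then 1%nat else 0%nat.

Fixpoint count_lt {X : Type} (A : nat -> X -> Prop) (L : nat) (x : X) : nat :=
  match L with O => O | S k => (count_lt A k x + indic (A k x))%nat end.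

Section Counting.
Context {X : metric_space} (mu : prob_measure X) (A : nat -> X -> Prop).
Hypothesis HA : forall j, borel (A j).

Lemma borel_count_ge L m : borel (fun x => (m <= count_lt A L x)%nat).
Proof.
  revert m; induction L as [|L IH]; intros [|m]; simpl;
    try (apply borel_ext with (A := fun _ => True); [apply borel_const | intro; split; auto; lia]).
  - apply borel_ext with (A := fun _ => False); [apply borel_const | intro; split; [tauto | lia]].
  - apply borel_ext
      with (A := fun x => (S m <= count_lt A L x)%nat \/ (A L x /\ (m <= count_lt A L x)%nat)).
    + apply borel_or; [apply IH | apply borel_and; auto].
    + intro x; unfold indic; destruct (excluded_middle_informative (A L x)); split;
        try (intros [h|[h1 h2]]; [lia | tauto || lia]); intro h; [|left; lia].
      destruct (le_lt_dec (S m) (count_lt A L x)); [left | right; split]; auto; lia.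
Qed.

(* [sum_(k < m) mu (count > k)] is the expectation of [min count m] *)
Lemma sum_pm_count_gt_le L m :
  sum_lt (fun k => pm mu (fun x => (S k <= count_lt A L x)%nat)) m <= sum_lt (fun j => pm mu (A j)) L.
Proof.
  revert m; induction L as [|L IH]; intro m; cbn [sum_lt].
  - replace 0 with (INR m * 0) by ring. apply sum_lt_le_const. intros k _. simpl.
    rewrite (pm_ext mu _ (fun _ => False)), pm_False by (intro; split; [lia | tauto]). lra.
  - set (E := fun k x => A L x /\ count_lt A L x = k).
    assert (bE : forall k, borel (E k)).
    { intro k. apply borel_ext with (A := fun x => A L x /\ ((k <= count_lt A L x)%nat /\
                                                              ~ (S k <= count_lt A L x)%nat)).
      - apply borel_and; [auto | apply borel_and, borel_compl; apply borel_count_ge].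
      - intro x; unfold E; split; intros [h1 h2]; split; auto; lia. }
    apply Rle_trans
      with (sum_lt (fun k => pm mu (fun x => (S k <= count_lt A L x)%nat) + pm mu (E k)) m).
    + apply sum_lt_le; intros k _.
      eapply Rle_trans; [|apply pm_or_le; [apply borel_count_ge | auto]].
      apply pm_mono; [apply borel_count_ge | apply borel_or; [apply borel_count_ge | auto]|].
      intro x. simpl. unfold E, indic.
      destruct (excluded_middle_informative (A L x)); intro h; [|left; lia].
      destruct (Nat.eq_dec (count_lt A L x) k); [right; auto | left; lia].
    + rewrite sum_lt_plus. pose proof (IH m).
      assert (sum_lt (fun k => pm mu (E k)) m <= pm mu (A L)).
      { rewrite <- pm_ex_lt_disjoint; auto.
        - apply pm_mono; [apply borel_ex_lt; auto | auto | intros x [k [_ [h _]]]; exact h].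
        - intros i j x hij [_ h1] [_ h2]. lia. }
      lra.
Qed.

Lemma markov_count L m :
  INR m * pm mu (fun x => (m <= count_lt A L x)%nat) <= sum_lt (fun j => pm mu (A j)) L.
Proof.
  eapply Rle_trans; [|apply (sum_pm_count_gt_le L m)].
  apply sum_lt_ge_const. intros k hk. apply pm_mono; try apply borel_count_ge. intros x h; lia.
Qed.

End Counting.

Definition visits_outside (S : cmpp_system) (K : sys_space S -> Prop) (a : Z) (L : nat)
  (x : sys_space S) : nat :=
  count_lt (fun j y => ~ K (sys_iter S (a + Z.of_nat j) y)) L x.

Lemma markov_visits_outside (S : cmpp_system) K a L m : borel K ->
  INR m * pm (sys_mu S) (fun x => (m <= visits_outside S K a L x)%nat)
    <= INR L * pm (sys_mu S) (fun x => ~ K x).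
Proof.
  intro HK.
  assert (HA : forall j, borel (fun y => ~ K (sys_iter S (a + Z.of_nat j) y)))
    by (intro j; apply (borel_preimage_sys_iter S _ (fun y => ~ K y)), borel_compl, HK).
  eapply Rle_trans; [apply markov_count, HA|].
  apply sum_lt_le_const. intros k _.
  rewrite (pm_preimage_sys_iter S _ (fun y => ~ K y)); [lra | apply borel_compl, HK].
Qed.

Section Factor.
Variables (SX SY : cmpp_system) (Phi : sys_space SX -> sys_space SY) (Zs : sys_space SX -> Prop).
Hypothesis HZ : forall x, ~ Zs x -> Phi (sys_T SX x) = sys_T SY (Phi x).

Lemma Phi_T_iter k x : (forall j, (j < k)%nat -> ~ Zs (Nat.iter j (sys_T SX) x)) ->
  Phi (Nat.iter k (sys_T SX) x) = Nat.iter k (sys_T SY) (Phi x).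
Proof.
  induction k as [|k IH]; intro H; simpl; [reflexivity|].
  rewrite HZ by (apply H; lia). rewrite IH; auto.
Qed.

Lemma Phi_Tinv_iter k x : (forall j, (j < k)%nat -> ~ Zs (Nat.iter (S j) (sys_Tinv SX) x)) ->
  Phi (Nat.iter k (sys_Tinv SX) x) = Nat.iter k (sys_Tinv SY) (Phi x).
Proof.
  induction k as [|k IH]; intro H; simpl; [reflexivity|].
  rewrite <- IH by (intros; apply H; lia).
  specialize (H k ltac:(lia)). simpl in H. apply HZ in H. rewrite sys_T_Tinv in H.
  rewrite H, sys_Tinv_T. reflexivity.
Qed.

Definition orbit_meets (N : nat) (x : sys_space SX) : Prop :=
  exists k, (k < N)%nat /\ (Zs (Nat.iter k (sys_T SX) x) \/ Zs (Nat.iter (S k) (sys_Tinv SX) x)).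

Lemma Phi_sys_iter N x : ~ orbit_meets N x -> forall n, (- Z.of_nat N <= n < Z.of_nat N)%Z ->
  Phi (sys_iter SX n x) = sys_iter SY n (Phi x).
Proof.
  intros H n hn. destruct n as [|p|p]; simpl; [reflexivity | apply Phi_T_iter | apply Phi_Tinv_iter];
    intros j hj hz; apply H; exists j; split; auto; lia.
Qed.

Hypotheses (HZb : borel Zs) (HZ0 : pm (sys_mu SX) Zs = 0).

Lemma borel_orbit_meets N : borel (orbit_meets N).
Proof.
  apply borel_ex_lt; intro k. apply borel_or.
  - apply (borel_preimage_continuous _ (continuous_iter _ k (sys_T_cont SX))), HZb.
  - apply (borel_preimage_continuous _ (continuous_iter _ (S k) (sys_Tinv_cont SX))), HZb.
Qed.

Lemma pm_orbit_meets N : pm (sys_mu SX) (orbit_meets N) = 0.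
Proof.
  apply Rle_antisym; [|apply pm_nonneg, borel_orbit_meets].
  replace 0 with (INR N * 0) by ring.
  eapply Rle_trans; [apply pm_ex_lt_le; intro k; apply borel_or | apply sum_lt_le_const; intros k _].
  1,2: apply borel_preimage_continuous;
         [apply continuous_iter; apply sys_T_cont || apply sys_Tinv_cont | exact HZb].
  eapply Rle_trans; [apply pm_or_le|].
  1,2: apply borel_preimage_continuous;
         [apply continuous_iter; apply sys_T_cont || apply sys_Tinv_cont | exact HZb].
  rewrite pm_preimage_T_iter, pm_preimage_Tinv_iter by exact HZb. lra.
Qed.

Variables (K : sys_space SX -> Prop) (eta beta D : R).
Hypotheses (HKb : borel K) (heta : 0 < eta) (hbeta : 0 <= beta) (hD : 0 < D).
Hypothesis HD : forall y y', ms_d (sys_space SY) y y' <= D.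
Hypothesis HK : forall p q, K p -> K q -> ms_d (sys_space SX) p q < eta ->
  ms_d (sys_space SY) (Phi p) (Phi q) < beta.

Lemma dist_image_le p q : ms_d (sys_space SY) (Phi p) (Phi q) <=
  beta + D * INR (indic (~ K p)) + D * INR (indic (~ K q)) + D / eta * ms_d (sys_space SX) p q.
Proof.
  pose proof (HD (Phi p) (Phi q)). pose proof (ms_d_nonneg (sys_space SX) p q).
  assert (0 <= D / eta * ms_d (sys_space SX) p q)
    by (apply Rmult_le_pos; [apply Rlt_le, Rdiv_lt_0_compat|]; auto).
  unfold indic.
  destruct (excluded_middle_informative (~ K p)) as [a|a];
  destruct (excluded_middle_informative (~ K q)) as [b|b]; simpl; try lra.
  destruct (Rlt_le_dec (ms_d (sys_space SX) p q) eta) as [h|h].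
  - pose proof (HK p q (NNPP _ a) (NNPP _ b) h). lra.
  - assert (D <= D / eta * ms_d (sys_space SX) p q).
    { unfold Rdiv. rewrite Rmult_assoc. rewrite <- (Rmult_1_r D) at 1. apply Rmult_le_compat_l; [lra|].
      apply (Rmult_le_reg_l eta); auto. rewrite <- Rmult_assoc, Rinv_r; lra. }
    lra.
Qed.

Lemma dseg_image_le a L x z :
  (forall k, (k < L)%nat ->
     Phi (sys_iter SX (a + Z.of_nat k) x) = sys_iter SY (a + Z.of_nat k) (Phi x)) ->
  (forall k, (k < L)%nat ->
     Phi (sys_iter SX (a + Z.of_nat k) z) = sys_iter SY (a + Z.of_nat k) (Phi z)) ->
  dseg SY a L (Phi x) (Phi z) <= INR L * beta + D * INR (visits_outside SX K a L x)
    + D * INR (visits_outside SX K a L z) + D / eta * dseg SX a L x z.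
Proof.
  induction L as [|L IH]; intros Hx Hz; [simpl; lra|].
  unfold visits_outside in *. simpl dseg. simpl count_lt.
  rewrite <- (Hx L), <- (Hz L) by lia. rewrite !plus_INR, S_INR.
  pose proof (IH ltac:(intros; apply Hx; lia) ltac:(intros; apply Hz; lia)).
  pose proof (dist_image_le (sys_iter SX (a + Z.of_nat L) x) (sys_iter SX (a + Z.of_nat L) z)).
  lra.
Qed.

Definition good_point (N m : nat) (x : sys_space SX) : Prop :=
  ~ orbit_meets N x /\ (visits_outside SX K (- Z.of_nat N) N x < m)%nat /\
  (visits_outside SX K 0 N x < m)%nat.

Lemma dseg_image_good a N m x z : (a = - Z.of_nat N \/ a = 0)%Z ->
  good_point N m x -> good_point N m z ->
  dseg SY a N (Phi x) (Phi z) <= INR N * beta + 2 * D * INR m + D / eta * dseg SX a N x z.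
Proof.
  intros ha [hx [hx1 hx2]] [hz [hz1 hz2]].
  assert (Eq : forall w, ~ orbit_meets N w -> forall k, (k < N)%nat ->
                 Phi (sys_iter SX (a + Z.of_nat k) w) = sys_iter SY (a + Z.of_nat k) (Phi w))
    by (intros w hw k hk; apply (Phi_sys_iter N); [exact hw | destruct ha; subst; lia]).
  pose proof (dseg_image_le a N x z (Eq x hx) (Eq z hz)).
  assert (INR (visits_outside SX K a N x) <= INR m /\ INR (visits_outside SX K a N z) <= INR m)
    as [cx cz] by (split; apply le_INR; destruct ha; subst; lia).
  nra.
Qed.

Lemma borel_good_point N m : borel (good_point N m).
Proof.
  assert (Hv : forall a, borel (fun x => (visits_outside SX K a N x < m)%nat)).
  { intro a. apply borel_ext with (A := fun x => ~ (m <= visits_outside SX K a N x)%nat); [|intro; lia].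
    apply borel_compl, borel_count_ge. intro j.
    apply (borel_preimage_sys_iter SX _ (fun y => ~ K y)), borel_compl, HKb. }
  apply borel_and; [apply borel_compl, borel_orbit_meets | apply borel_and; apply Hv].
Qed.

Lemma pm_not_good_point N m :
  INR m * pm (sys_mu SX) (fun x => ~ good_point N m x) <= 2 * INR N * pm (sys_mu SX) (fun x => ~ K x).
Proof.
  set (V := fun a x => (m <= visits_outside SX K a N x)%nat).
  assert (bV : forall a, borel (V a)).
  { intro a. apply borel_count_ge. intro j.
    apply (borel_preimage_sys_iter SX _ (fun y => ~ K y)), borel_compl, HKb. }
  assert (Hsub : pm (sys_mu SX) (fun x => ~ good_point N m x)
                 <= pm (sys_mu SX) (orbit_meets N) + (pm (sys_mu SX) (V (- Z.of_nat N)%Z)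
                                                       + pm (sys_mu SX) (V 0%Z))).
  { eapply Rle_trans; [|apply Rplus_le_compat_l, pm_or_le; auto].
    eapply Rle_trans; [|apply pm_or_le; [apply borel_orbit_meets | apply borel_or; auto]].
    apply pm_mono; [apply borel_compl, borel_good_point
                   | apply borel_or; [apply borel_orbit_meets | apply borel_or; auto]|].
    intros x h. unfold V. destruct (classic (orbit_meets N x)); [left; auto | right].
    destruct (le_lt_dec m (visits_outside SX K (- Z.of_nat N) N x)); [left; auto|].
    destruct (le_lt_dec m (visits_outside SX K 0 N x)); [right; auto|].
    exfalso; apply h; repeat split; auto. }
  rewrite pm_orbit_meets in Hsub. pose proof (pos_INR m).
  pose proof (markov_visits_outside SX K (- Z.of_nat N) N m HKb).
  pose proof (markov_visits_outside SX K 0 N m HKb).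
  fold (V (- Z.of_nat N)%Z) (V 0%Z) in *. nra.
Qed.

Lemma sysBICOV_ge_factor (HPhi : borel_map Phi)
  (Hpush : forall B, borel B -> pm (sys_mu SX) (fun x => B (Phi x)) = pm (sys_mu SY) B)
  N m eps alpha alpha1 kappa kappa1 kappa' delta delta1 M :
  0 <= alpha1 <= alpha -> 0 < eps -> (0 < m)%nat -> eps * INR N <= INR m <= 2 * (eps * INR N) ->
  2 * alpha1 * pm (sys_mu SX) (fun x => ~ K x) <= eps * (kappa - kappa1) ->
  beta + 4 * D * eps + D / eta * delta1 <= delta ->
  sysBICOV_ge SY N alpha kappa kappa' (delta * INR N) M ->
  sysBICOV_ge SX N alpha1 kappa1 kappa' (delta1 * INR N) M.
Proof.
  intros [ha0 ha] heps hm [hm1 hm2] Hmeas Hwin.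
  pose proof (pos_INR N).
  assert (Hgood : forall a x z, (a = - Z.of_nat N \/ a = 0)%Z -> good_point N m x ->
            good_point N m z -> dseg SX a N x z < delta1 * INR N ->
            dseg SY a N (Phi x) (Phi z) < delta * INR N).
  { intros a x z ha' hx hz hd. eapply Rle_lt_trans; [apply dseg_image_good; eauto|].
    assert (D / eta * dseg SX a N x z < D / eta * (delta1 * INR N))
      by (apply Rmult_lt_compat_l; [apply Rdiv_lt_0_compat |]; auto).
    pose proof (Rmult_le_compat_r (INR N) _ _ H Hwin). nra. }
  apply (BICOV_ge_pullback (sys_mu SX) (sys_mu SY) Phi (dseg SX (- Z.of_nat N) N) (dseg SX 0 N)
           (dseg SY (- Z.of_nat N) N) (dseg SY 0 N) (good_point N m) alpha alpha1 kappa kappa1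
           kappa' (delta * INR N) (delta1 * INR N) M HPhi Hpush (open_dseg_ball SX 0 N)
           (open_dseg_ball SY 0 N) ha (borel_good_point N m));
    [| intros x z; apply Hgood; left; reflexivity | intros x z; apply Hgood; right; reflexivity].
  (* [alpha1 m mu(~G) <= 2 alpha1 N mu(~K) <= eps N (kappa - kappa1) <= m (kappa - kappa1)] *)
  pose proof (pm_nonneg _ (sys_mu SX) _ (borel_compl _ HKb)).
  pose proof (Rmult_le_compat_l alpha1 _ _ ha0 (pm_not_good_point N m)).
  pose proof (Rmult_le_compat_l (INR N) _ _ (pos_INR N) Hmeas).
  assert (0 <= kappa - kappa1) by nra.
  pose proof (Rmult_le_compat_r (kappa - kappa1) _ _ ltac:(assumption) hm1).
  apply (Rmult_le_reg_l (INR m)); [apply lt_0_INR, hm|]. lra.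
Qed.

End Factor.

Lemma archimedean_scale eps : 0 < eps -> exists N0 : nat, (0 < N0)%nat /\
  forall N, (N0 <= N)%nat -> exists m : nat, (0 < m)%nat /\ eps * INR N <= INR m <= 2 * (eps * INR N).
Proof.
  intro heps. destruct (archimed_cor1 eps heps) as [N0 [hN0 hN0pos]].
  exists N0; split; [exact hN0pos|]. intros N hN.
  assert (h1 : 1 <= eps * INR N).
  { assert (INR N0 <= INR N) by (apply le_INR, hN).
    apply (Rmult_lt_compat_r (INR N0)) in hN0; [|apply lt_0_INR; exact hN0pos].
    rewrite Rinv_l in hN0 by (apply not_0_INR; lia). nra. }
  destruct (archimed (eps * INR N)) as [hu1 hu2].
  assert (0 <= up (eps * INR N))%Z by (apply le_IZR; lra).
  assert (hm : INR (Z.to_nat (up (eps * INR N))) = IZR (up (eps * INR N)))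
    by (rewrite INR_IZR_INZ, Z2Nat.id; auto).
  exists (Z.to_nat (up (eps * INR N))). rewrite hm.
  split; [apply INR_lt; rewrite hm; simpl; lra | lra].
Qed.

Theorem mainTheorem3 :
  forall (SX SY : cmpp_system) (Phi : sys_space SX -> sys_space SY),
    borel_factor SX SY Phi ->
  forall alpha delta kappa kappa' : R,
    1 < alpha -> 0 < delta -> 0 < kappa' -> kappa' < kappa ->
  forall alpha1 : R, 1 <= alpha1 < alpha ->
    exists kappa1 delta1 : R,
      kappa' < kappa1 < kappa /\ 0 < delta1 < delta /\
      exists N0 : nat, forall N : nat, (N0 <= N)%nat ->
        forall M : nat,
          sysBICOV_ge SY N alpha kappa kappa' (delta * INR N) M ->
          sysBICOV_ge SX N alpha1 kappa1 kappa' (delta1 * INR N) M.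
Proof.
  intros SX SY Phi [HPhi [[Zs [HZb [HZ0 HZ]]] Hpush]] alpha delta kappa kappa'
    halpha hdelta hk' hkk alpha1 [ha1 ha1'].
  destruct (compact_diameter_bounded (sys_compact SY)) as [D [hD HD]].
  set (eps := delta / (16 * D)).
  set (tau := eps * (kappa - kappa') / (4 * alpha1)).
  assert (heps : 0 < eps) by (unfold eps; apply Rdiv_lt_0_compat; lra).
  assert (htau : 0 < tau) by (unfold tau; apply Rdiv_lt_0_compat; [apply Rmult_lt_0_compat |]; lra).
  destruct (lusin (sys_mu SX) Phi (sys_compact SX) (sys_compact SY) HPhi (delta / 4) tau
              ltac:(lra) htau) as [K [HKb [HKm [eta [heta HK]]]]].
  set (delta1 := Rmin (delta / 2) (eta * delta / (2 * D))).
  assert (hd1 : 0 < delta1)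
    by (apply Rmin_glb_lt; [lra | apply Rdiv_lt_0_compat; [apply Rmult_lt_0_compat |]; lra]).
  assert (hd1l : delta1 <= delta / 2) by apply Rmin_l.
  assert (hd1r : D / eta * delta1 <= delta / 2).
  { apply (Rmult_le_reg_l (eta / D)); [apply Rdiv_lt_0_compat; lra|].
    replace (eta / D * (D / eta * delta1)) with delta1 by (field; lra).
    replace (eta / D * (delta / 2)) with (eta * delta / (2 * D)) by (field; lra). apply Rmin_r. }
  exists ((kappa + kappa') / 2), delta1; split; [lra | split; [lra |]].
  destruct (archimedean_scale eps heps) as [N0 [_ HN0]].
  exists N0. intros N hN M. destruct (HN0 N hN) as [m [hm0 hm]].
  apply (sysBICOV_ge_factor SX SY Phi Zs HZ HZb HZ0 K eta (delta / 4) D HKb heta ltac:(lra) hD HD HK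
           HPhi Hpush N m eps); [lra | exact heps | exact hm0 | exact hm | |].
  - replace (eps * (kappa - (kappa + kappa') / 2)) with (2 * alpha1 * tau) by (unfold tau; field; lra).
    apply Rmult_le_compat_l; [lra | exact HKm].
  - replace (4 * D * eps) with (delta / 4) by (unfold eps; field; lra). lra.
Qed.
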